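(* Let $\{\nu_t\}_{t\ge0}\subset\mathcal{P}(\mathbb{T})$ be a weakly continuous $\rhd$-convolution semigroup with $\nu_0=\delta_1$ and $\nu_1=\delta_{e^{i\alpha}}$ for some $\alpha\in\mathbb{R}$. Let $B_2:\mathbb{D}\to\mathbb{C}$ be an analytic function with $\operatorname{Re}B_2\le0$ such that $$\frac{d}{dt}\eta_{\nu_t}(z)=\eta_{\nu_t}(z)\,B_2(\eta_{\nu_t}(z))\qquad\text{for all } t\ge0,\ z\in\mathbb{D}.$$ Then $B_2$ is a constant function with value in $i\mathbb{R}$.
   Context: $\mathbb{T}$ is the unit circle, $\mathbb{D}$ the open unit disc, $\mathcal{P}(\mathbb{T})$ the Borel probability measures on $\mathbb{T}$, and $\delta_a$ the Dirac mass at $a$. For $\nu\in\mathcal{P}(\mathbb{T})$ let $\psi_\nu(z)=\int\frac{z\zeta}{1-z\zeta}d\nu(\zeta)$ and $\eta_\nu=\psi_\nu/(1+\psi_\nu)$ on $\mathbb{D}$; $\eta_\nu$ determines $\nu$. The multiplicative monotone convolution $\nu_1\rhd\nu_2$ is defined by $\eta_{\nu_1\rhd\nu_2}=\eta_{\nu_1}\circ\eta_{\nu_2}$. A weakly continuous $\rhd$-convolution semigroup is a family $\{\nu_t\}_{t\ge0}$ with $\nu_{s+t}=\nu_s\rhd\nu_t$ for all $s,t\ge0$ and $t\mapsto\nu_t$ weakly continuous. *)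

From HB Require Import structures.
From mathcomp Require Import all_boot all_order all_algebra.
From mathcomp Require Import all_classical all_reals all_analysis.
From mathcomp Require Import complex.
Import Order.TTheory GRing.Theory Num.Theory.
Import numFieldNormedType.Exports.

Set Implicit Arguments.
Unset Strict Implicit.
Unset Printing Implicit Defensive.

Local Open Scope classical_set_scope.
Local Open Scope ring_scope.

(* The complex plane C over a real type R, with its canonical normed /
   topological structure (the ^o copy gives C the structure of a normed
   module over itself, i.e. complex differentiability). *)
Definition CC (R : realType) := (R[i])^o.

(* Borel
   probability measures on the unit circle T are represented as probability
   measures on the Borel sets of R*R which give full mass to T. *)
Definition toC (R : realType) (p : R * R) : CC R := Complex p.1 p.2.

Definition circle (R : realType) : set (R * R) := [set p | p.1 ^+ 2 + p.2 ^+ 2 = 1].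
Definition disc (R : realType) : set (CC R) := [set z | `|z| < 1].

Definition prob_on_circle (R : realType) (nu : probability (R * R)%type R) : Prop :=
  nu (~` @circle R) = 0%E.

Definition Cintegral (R : realType) (nu : probability (R * R)%type R)
    (f : R * R -> CC R) : CC R :=
  Complex (Rintegral nu setT (fun p => complex.Re (f p)))
          (Rintegral nu setT (fun p => complex.Im (f p))).

Definition psiT (R : realType) (nu : probability (R * R)%type R) (z : CC R) : CC R :=
  Cintegral nu (fun p => z * toC p / (1 - z * toC p)).

Definition etaT (R : realType) (nu : probability (R * R)%type R) (z : CC R) : CC R :=
  psiT nu z / (1 + psiT nu z).

(* nu = nu1 |> nu2  (multiplicative monotone convolution):
   eta_nu = eta_nu1 o eta_nu2 on the unit disc *)
Definition is_mmconv (R : realType) (nu1 nu2 nu : probability (R * R)%type R) : Prop :=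
  forall z, @disc R z -> etaT nu z = etaT nu1 (etaT nu2 z).

(* weak continuity of t |-> nu_t on [0, +oo): for every bounded continuous
   real function f (on the plane; equivalently on T, by Tietze extension),
   t |-> \int f d nu_t is continuous on [0, +oo). *)
Definition weakly_continuous (R : realType) (nu : R -> probability (R * R)%type R) : Prop :=
  forall f : R * R -> R, continuous f -> (exists M : R, forall p, `|f p| <= M) ->
    {within `[0, +oo[, continuous (fun t => Rintegral (nu t) setT f)}.

Definition mm_semigroup (R : realType) (nu : R -> probability (R * R)%type R) : Prop :=
  (forall t, 0 <= t -> prob_on_circle (nu t)) /\
  (forall s t, 0 <= s -> 0 <= t -> is_mmconv (nu s) (nu t) (nu (s + t))) /\
  weakly_continuous nu.

Definition has_tderiv (R : realType) (F : R -> CC R) (t : R) (l : CC R) : Prop :=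
  (fun h : R => (F (t + h) - F t) / (h%:C)%C)
    @ within (fun h : R => h != 0 /\ 0 <= t + h) (nbhs 0) --> l.

Definition analytic_on_disc (R : realType) (f : CC R -> CC R) : Prop :=
  forall z, @disc R z -> derivable f z 1.

From HB Require Import structures.
From mathcomp Require Import all_boot all_order all_algebra.
From mathcomp Require Import all_classical all_reals all_analysis.
From mathcomp Require Import complex.
From mathcomp Require Import ring lra.
Import Order.TTheory GRing.Theory Num.Theory.
Import numFieldNormedType.Exports.
Set Implicit Arguments.
Unset Strict Implicit.
Unset Printing Implicit Defensive.

(* Fix w in the disc and let F t := eta_(nu_t)(w). By the differential equation,
   d/dt |F|^2 = 2 |F|^2 Re B2(F), which is <= 0 as long as F stays in the disc,
   so |F| is nonincreasing. Since nu_0 and nu_1 are Dirac masses on the circle,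
   F 0 = w and |F 1| = |w|; a negative derivative at t = 0 would force
   |F 1| < |w|, hence Re B2(w) = 0 for w <> 0, and at w = 0 by continuity.
   An analytic function with vanishing real part has vanishing derivative
   (Cauchy-Riemann), so B2 is constant along every ray from 0. *)

Local Open Scope classical_set_scope.
Local Open Scope ring_scope.

Section ComplexFacts.
Variable R : realType.
Implicit Types w z : R[i].

Definition sqnorm w : R := complex.Re w ^+ 2 + complex.Im w ^+ 2.

Lemma sqnorm_ge0 w : 0 <= sqnorm w.
Proof. by rewrite addr_ge0 ?sqr_ge0. Qed.

Lemma sqnorm_gt0 w : w != 0 -> 0 < sqnorm w.
Proof.
rewrite lt_def sqnorm_ge0 andbT; apply: contraNneq => /eqP.
case: w => a b; rewrite /sqnorm /= paddr_eq0 ?sqr_ge0 // !sqrf_eq0.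
by case/andP => /eqP -> /eqP ->.
Qed.

Lemma sqnorm1 : sqnorm 1 = 1.
Proof. by rewrite /sqnorm /= expr1n expr0n addr0. Qed.

Lemma sqnormM w z : sqnorm (w * z) = sqnorm w * sqnorm z.
Proof. by case: w => a b; case: z => c d; rewrite /sqnorm /=; ring. Qed.

Lemma ReB w z : complex.Re (w - z) = complex.Re w - complex.Re z.
Proof. by case: w; case: z. Qed.

Lemma ImB w z : complex.Im (w - z) = complex.Im w - complex.Im z.
Proof. by case: w; case: z. Qed.

Lemma Re_div_real w (s : R) :
  complex.Re w = 0 -> complex.Re (w / (s%:C)%C) = 0.
Proof. by case: w => x y /= ->; ring. Qed.

Lemma Im_div_imag w (s : R) :
  complex.Re w = 0 -> complex.Im (w / ((s%:C)%C * 'i%C)) = 0.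
Proof. by case: w => x y /= ->; ring. Qed.

Lemma Re_conj_mul w z :
  complex.Re w * complex.Re (w * z) + complex.Im w * complex.Im (w * z) =
  sqnorm w * complex.Re z.
Proof. by case: w => a b; case: z => c d; rewrite /sqnorm /=; ring. Qed.

Lemma disc_sqnorm (w : CC R) : @disc R w <-> sqnorm w < 1.
Proof.
rewrite /disc /= normc_def (_ : 1 = 1%:C)%C // ltcR.
by rewrite -{1}sqrtr1 ltr_sqrt.
Qed.

Lemma normc_i : `|'i%C| = 1 :> R[i].
Proof. by rewrite normc_def /= expr0n expr1n add0r sqrtr1. Qed.

Lemma normc_ge_Im w : (`|complex.Im w|%:C)%C <= `|w|.
Proof.
have := normc_ge_Re (w * 'i%C).
by rewrite ReiNIm normrN normrM normc_i mulr1.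
Qed.

Lemma normc_Re_lt w (e : R) : `|w| < (e%:C)%C -> `|complex.Re w| < e.
Proof. by rewrite -ltcR; exact: le_lt_trans (normc_ge_Re w). Qed.

Lemma normc_Im_lt w (e : R) : `|w| < (e%:C)%C -> `|complex.Im w| < e.
Proof. by rewrite -ltcR; exact: le_lt_trans (normc_ge_Im w). Qed.

Lemma Re_lt_norm w z (e : R) :
  complex.Re w = 0 -> `|w - z| < (e%:C)%C -> `|complex.Re z| < e.
Proof. by move=> w0 /normc_Re_lt; rewrite ReB w0 sub0r normrN. Qed.

Lemma Im_lt_norm w z (e : R) :
  complex.Im w = 0 -> `|w - z| < (e%:C)%C -> `|complex.Im z| < e.
Proof. by move=> w0 /normc_Im_lt; rewrite ImB w0 sub0r normrN. Qed.

Lemma normc_real (s : R) : `|(s%:C)%C : R[i]| = (`|s|%:C)%C.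
Proof. by rewrite normc_def /= expr0n addr0 sqrtr_sqr. Qed.

Lemma normr_lt_all_eq0 (x : R) : (forall e, 0 < e -> `|x| < e) -> x = 0.
Proof.
move=> xe; apply/eqP; rewrite -normr_le0; apply/ler_addgt0Pr => e e0.
by rewrite add0r ltW // xe.
Qed.

End ComplexFacts.

Section DiracEta.
Variable R : realType.
Local Notation cmeasurable g :=
  (measurable_fun setT (fun p : R * R => complex.Re (g p : R[i])) /\
   measurable_fun setT (fun p : R * R => complex.Im (g p : R[i]))).

Lemma measurable_invr : measurable_fun setT (@GRing.inv R).
Proof.
have closed0 : closed [set 0 : R].
  exact/accessible_closed_set1/hausdorff_accessible/Rhausdorff.
have m0 := measurable_realfun.closed_measurable closed0.
rewrite -(setUv [set 0 : R]); apply/measurable_funU => //; first exact: measurableC.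
split; first exact: measurable_fun_set1.
apply: measurable_realfun.open_continuous_measurable_fun; first by rewrite openC.
by move=> x /[!inE] /eqP x0; exact: inv_continuous.
Qed.

Lemma cmeasurable_cst (c : R[i]) : cmeasurable (fun _ => c).
Proof. by split; exact: measurable_cst. Qed.

Lemma cmeasurable_toC : cmeasurable (@toC R).
Proof. by split; [exact: measurable_fst | exact: measurable_snd]. Qed.

Lemma cmeasurableB (f g : R * R -> R[i]) :
  cmeasurable f -> cmeasurable g -> cmeasurable (fun p => f p - g p).
Proof.
move=> [f1 f2] [g1 g2].
have -> : (fun p => complex.Re (f p - g p)) =
    (fun p => complex.Re (f p)) \- (fun p => complex.Re (g p)).
  by apply: funext => p; exact: ReB.
have -> : (fun p => complex.Im (f p - g p)) =
    (fun p => complex.Im (f p)) \- (fun p => complex.Im (g p)).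
  by apply: funext => p; exact: ImB.
by split; exact: measurable_realfun.measurable_funB.
Qed.

Lemma cmeasurableM (f g : R * R -> R[i]) :
  cmeasurable f -> cmeasurable g -> cmeasurable (fun p => f p * g p).
Proof.
move=> [f1 f2] [g1 g2].
have -> : (fun p => complex.Re (f p * g p)) =
    (fun p => complex.Re (f p)) \* (fun p => complex.Re (g p)) \-
    (fun p => complex.Im (f p)) \* (fun p => complex.Im (g p)).
  by apply: funext => p /=; case: (f p) => ? ?; case: (g p) => ? ? /=.
have -> : (fun p => complex.Im (f p * g p)) =
    (fun p => complex.Re (f p)) \* (fun p => complex.Im (g p)) \+
    (fun p => complex.Im (f p)) \* (fun p => complex.Re (g p)).
  by apply: funext => p /=; case: (f p) => ? ?; case: (g p) => ? ? /=.
split; [apply: measurable_realfun.measurable_funB |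
        apply: measurable_realfun.measurable_funD];
  exact: measurable_realfun.measurable_funM.
Qed.

Lemma cmeasurableV (f : R * R -> R[i]) :
  cmeasurable f -> cmeasurable (fun p => (f p)^-1).
Proof.
move=> [f1 f2].
set n := fun p => (complex.Re (f p) ^+ 2 + complex.Im (f p) ^+ 2)^-1.
have mn : measurable_fun setT n.
  apply: measurableT_comp measurable_invr _.
  apply: measurable_realfun.measurable_funD;
  exact: measurable_realfun.measurable_funX.
have -> : (fun p => complex.Re (f p)^-1) = (fun p => complex.Re (f p)) \* n.
  by apply: funext => p; rewrite /n /=; case: (f p).
have -> : (fun p => complex.Im (f p)^-1) = \- (fun p => complex.Im (f p)) \* n.
  by apply: funext => p; rewrite /n /=; case: (f p) => ? ? /=; rewrite mulNr.
split; apply: measurable_realfun.measurable_funM => //.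
exact: measurable_realfun.measurable_funN.
Qed.

Lemma Cintegral_dirac (nu : probability (R * R)%type R) (a : R * R)
    (f : R * R -> CC R) :
  (forall A, measurable A -> nu A = \d_a A) -> cmeasurable f ->
  Cintegral nu f = f a.
Proof.
move=> nuE [f1 f2]; rewrite /Cintegral /Rintegral.
rewrite (eq_measure_integral (\d_a)); last by move=> A mA _; exact: nuE.
rewrite [in X in Complex _ X](eq_measure_integral (\d_a));
  last by move=> A mA _; exact: nuE.
rewrite !integral_dirac //; try exact/measurable_realfun.measurable_EFinP.
by rewrite diracT !mul1e /=; case: (f a).
Qed.

Lemma etaT_dirac (nu : probability (R * R)%type R) (a : R * R) (z : CC R) :
  (forall A, measurable A -> nu A = \d_a A) -> sqnorm (toC a) = 1 ->
  @disc R z -> etaT nu z = z * toC a.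
Proof.
move=> nuE a1 /disc_sqnorm z1.
set u := z * toC a.
have u1 : 1 - u != 0.
  have uz : sqnorm u = sqnorm z by rewrite sqnormM a1 mulr1.
  rewrite subr_eq0 eq_sym; apply/eqP => u_eq1; move: z1.
  by rewrite -uz u_eq1 sqnorm1 ltxx.
have mf : cmeasurable (fun p => z * toC p / (1 - z * toC p)).
  have mzp := cmeasurableM (cmeasurable_cst z) cmeasurable_toC.
  exact/(cmeasurableM mzp)/cmeasurableV/(cmeasurableB (cmeasurable_cst 1) mzp).
rewrite /etaT /psiT (Cintegral_dirac nuE mf) -/u.
have -> : 1 + u / (1 - u) = (1 - u)^-1.
  by rewrite -{1}(divff u1) -mulrDl subrK div1r.
by rewrite invrK -mulrA mulVf ?mulr1.
Qed.

End DiracEta.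

Section RealDerivative.
Variable R : realType.
Implicit Types (A : set R) (r d : R -> R).

Definition has_deriv_within A r (t l : R) : Prop :=
  (fun h => (r (t + h) - r t) / h)
    @ within (fun h => h != 0 /\ A (t + h)) (nbhs 0) --> l.

Lemma has_deriv_withinP A r t l : has_deriv_within A r t l <->
  forall e, 0 < e -> exists2 d, 0 < d & forall h, A (t + h) -> `|h| < d ->
    `|r (t + h) - r t - l * h| <= e * `|h|.
Proof.
split=> [/cvgrPdist_lt dr e e0|dr].
  have := dr e e0; rewrite near_withinE => /nbhs_normP [d /= d0 Hd].
  exists d => // h Ah hd; have [->|h0] := eqVneq h 0.
    by rewrite addr0 subrr mulr0 subrr normr0 mulr0.
  have := Hd h; rewrite /ball_ /= sub0r normrN => /(_ hd (conj h0 Ah)) /ltW.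
  have hpos : 0 < `|h| by rewrite normr_gt0.
  by rewrite -(ler_pM2r hpos) -normrM mulrBl divfK // distrC mulrC.
apply/cvgrPdist_le => e e0; have [d d0 Hd] := dr e e0.
rewrite near_withinE; apply/nbhs_normP; exists d => // h /=.
rewrite /ball_ /= sub0r normrN => hd [h0 Ah].
have hpos : 0 < `|h| by rewrite normr_gt0.
by rewrite -(ler_pM2r hpos) -normrM mulrBl divfK // distrC; exact: Hd.
Qed.

Lemma has_deriv_withinN A r t l : has_deriv_within A r t l ->
  has_deriv_within A (fun s => - r s) t (- l).
Proof.
move=> /cvgN; apply: cvg_trans; apply: near_eq_cvg; near=> h.
by rewrite /= -mulNr opprB opprK addrC.
Unshelve. all: by end_near. Qed.

Lemma deriv_right_lt A r t l eps : has_deriv_within A r t l -> l < eps ->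
  exists2 d, 0 < d & forall h, 0 < h < d -> A (t + h) ->
    r (t + h) < r t + eps * h.
Proof.
move=> dr leps; have e0 : 0 < (eps - l) / 2 by rewrite divr_gt0 ?subr_gt0.
have /has_deriv_withinP/(_ _ e0) [d d0 Hd] := dr.
exists d => // h /andP[h0 hd] Ah.
have := Hd h Ah; rewrite gtr0_norm // => /(_ hd); rewrite ler_norml => /andP[_ hi].
have : (eps - l) / 2 * h < (eps - l) * h.
  by rewrite ltr_pM2r // ltr_pdivrMr // ltr_pMr ?subr_gt0 // ltr1n.
lra.
Qed.

Lemma deriv_left_le A r t l a G : has_deriv_within A r t l -> a < t ->
  [set s | a <= s < t] `<=` A -> (forall s, a <= s < t -> r s <= G) -> r t <= G.
Proof.
move=> dr at_ sub_A rG; apply/ler_addgt0Pr => e e0.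
have /has_deriv_withinP/(_ 1 ltr01) [d d0 Hd] := dr.
pose K := `|l| + 1.
have K0 : 0 < K by rewrite ltr_pwDr.
pose rho := Num.min d (Num.min (t - a) (e / K)).
have rho0 : 0 < rho by rewrite !lt_min d0 subr_gt0 at_ divr_gt0.
have rho_d : rho <= d by rewrite ge_min lexx.
have rho_ta : rho <= t - a by rewrite !ge_min lexx ?orbT.
have rho_e : rho * K <= e by rewrite -ler_pdivlMr // !ge_min lexx ?orbT.
pose s := t - rho / 2.
have sI : a <= s < t by apply/andP; split; rewrite /s; lra.
have sE : t + (s - t) = s by rewrite addrC subrK.
have ts : `|s - t| = rho / 2.
  by rewrite /s addrAC subrr add0r normrN gtr0_norm ?divr_gt0.
have As : A (t + (s - t)) by rewrite sE; exact: sub_A.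
have := Hd _ As; rewrite sE ts mul1r ler_norml => /(_ _) bound.
have {bound} /andP[lo _] := bound ltac:(lra).
have := rG s sI; have := normr_ge0 l; have := ler_norm l.
rewrite /s /K in lo rho_e *; nra.
Qed.

Section Dini.
Variables (r d : R -> R) (A : set R) (a b c : R).
Hypothesis sub_A : [set s | a <= s <= b] `<=` A.
Hypothesis r_deriv : forall t, a <= t <= b -> has_deriv_within A r t (d t).
Hypothesis deriv_le0 : forall t, a <= t <= b -> r t < c -> d t <= 0.

(* Continuous induction from the infimum of the points where [r] exceeds the line. *)
Lemma le_slope_of_deriv (eps : R) : 0 < eps -> r a + eps * (b - a) < c ->
  forall t, a <= t <= b -> r t <= r a + eps * (t - a).
Proof.
move=> eps0 ltc t /andP[ta tb].
pose g s := r a + eps * (s - a).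
have g_le s s' : s <= s' -> g s <= g s'.
  by move=> ss'; rewrite lerD2l ler_pM2l // lerD2r.
rewrite leNgt; apply/negP => gt_rt.
pose S := [set s | (a <= s <= b) /\ g s < r s].
have St : S t by split => //; apply/andP.
have infS : has_inf S by split; [exists t | exists a => s [/andP[]]].
set m := inf S.
have mt : m <= t := ge_inf infS.2 St.
have am : a <= m by apply: lb_le_inf => // [|s [/andP[]]]; first by exists t.
have mab : a <= m <= b by rewrite am (le_trans mt tb).
have rm : r m <= g m.
  have [am'|ma] := ltrP a m; last first.
    have -> : m = a by apply/eqP; rewrite eq_le ma am.
    by rewrite /g subrr mulr0 addr0.
  apply: deriv_left_le (r_deriv mab) am' _ _ => s /andP[sa sm].
    by apply: sub_A; rewrite /= sa (le_trans (ltW sm)) ?(le_trans mt).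
  rewrite (le_trans _ (g_le _ _ (ltW sm))) // leNgt; apply/negP => gs.
  have : m <= s.
    by apply: (ge_inf infS.2); rewrite /S /= sa gs (le_trans (ltW sm)) ?(le_trans mt).
  by rewrite leNgt sm.
have dm0 : d m <= 0.
  apply: (deriv_le0 mab); apply: le_lt_trans rm (le_lt_trans _ ltc).
  by apply: g_le; case/andP: mab.
have [del del0 Hdel] := deriv_right_lt (r_deriv mab) (le_lt_trans dm0 eps0).
have [s [/andP[sa sb] gs] sm] := inf_adherent del0 infS.
have ms : m <= s by apply: (ge_inf infS.2); rewrite /S /= sa sb.
move: gs; apply/negP; rewrite -leNgt.
have [<- //|ms'] := eqVneq m s.
have sE : m + (s - m) = s by rewrite addrC subrK.
have As : A (m + (s - m)) by rewrite sE; apply: sub_A; rewrite /= sa sb.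
have hI : 0 < s - m < del by rewrite subr_gt0 lt_neqAle ms' ms /= ltrBlDl.
have := Hdel _ hI As; rewrite sE.
have : g s = g m + eps * (s - m) by rewrite /g; ring.
lra.
Qed.

Lemma nonincreasing_of_deriv : a <= b -> r a < c -> r b <= r a.
Proof.
move=> ab rac; apply/ler_addgt0Pr => e e0.
pose mu := Num.min e (c - r a).
have mu0 : 0 < mu by rewrite lt_min e0 subr_gt0.
have mu_e : mu <= e by rewrite ge_min lexx.
have mu_c : mu <= c - r a by rewrite ge_min lexx orbT.
have ba1 : 0 < b - a + 1 by rewrite ltr_pwDr // subr_ge0.
pose eps := mu / (2 * (b - a + 1)).
have eps0 : 0 < eps by rewrite divr_gt0 // mulr_gt0.
have epsE : eps * (b - a) + eps = mu / 2.
  by rewrite /eps; field; rewrite gt_eqF.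
have := @le_slope_of_deriv eps eps0 ltac:(lra) b ltac:(by rewrite ab lexx).
lra.
Qed.

End Dini.

End RealDerivative.

Section SqnormDerivative.
Variable R : realType.

Lemma cvg_Re {T} (G : set_system T) {FG : Filter G} (f : T -> CC R) (l : CC R) :
  f @ G --> l -> (fun x => complex.Re (f x)) @ G --> complex.Re l.
Proof.
move/cvgrPdist_lt => fl; apply/cvgrPdist_lt => e e0.
have /fl : (0 : CC R) < (e%:C)%C by rewrite ltcR.
by apply: filterS => x; rewrite -ReB; exact: normc_Re_lt.
Qed.

Lemma cvg_Im {T} (G : set_system T) {FG : Filter G} (f : T -> CC R) (l : CC R) :
  f @ G --> l -> (fun x => complex.Im (f x)) @ G --> complex.Im l.
Proof.
move/cvgrPdist_lt => fl; apply/cvgrPdist_lt => e e0.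
have /fl : (0 : CC R) < (e%:C)%C by rewrite ltcR.
by apply: filterS => x; rewrite -ImB; exact: normc_Im_lt.
Qed.

Lemma has_tderiv_sqnorm (F : R -> CC R) t l : has_tderiv F t l ->
  has_deriv_within [set s | 0 <= s] (fun s => sqnorm (F s)) t
    (2 * (complex.Re (F t) * complex.Re l + complex.Im (F t) * complex.Im l)).
Proof.
move=> Fl; set Q := fun h : R => (F (t + h) - F t) / (h%:C)%C in Fl.
pose a h := complex.Re (Q h); pose b h := complex.Im (Q h).
set x0 := complex.Re (F t); set y0 := complex.Im (F t).
have quotE h : h != 0 -> (sqnorm (F (t + h)) - sqnorm (F t)) / h =
    2 * (x0 * a h + y0 * b h) + h * (a h ^+ 2 + b h ^+ 2).
  move=> h0; have hC : (h%:C)%C != 0 :> R[i] by rewrite fmorph_eq0.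
  have -> : F (t + h) = F t + (h%:C)%C * Q h.
    by rewrite /Q [_ * (_ / _)]mulrC divfK // (addrC (F t)) subrK.
  rewrite /a /b /x0 /y0; case: (Q h) => u v; case: (F t) => p q.
  by rewrite /sqnorm /=; field.
have L : (fun h => 2 * (x0 * a h + y0 * b h) + h * (a h ^+ 2 + b h ^+ 2))
    @ within (fun h => h != 0 /\ 0 <= t + h) (nbhs 0) -->
    2 * (x0 * complex.Re l + y0 * complex.Im l) +
    0 * (complex.Re l ^+ 2 + complex.Im l ^+ 2).
  have [La Lb] := (cvg_Re Fl, cvg_Im Fl).
  apply: cvgD; first by apply: cvgMl_tmp; apply: cvgD; exact: cvgMl_tmp.
  apply: cvgM; first exact: cvg_within_filter cvg_id.
  by apply: cvgD; exact: cvgM.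
rewrite mul0r addr0 in L; apply: cvg_trans L; apply: near_eq_cvg.
rewrite near_withinE; near=> h => -[h0 _]; exact/esym/quotE.
Unshelve. all: by end_near. Qed.

End SqnormDerivative.

Section FlowModulus.
Variables (R : realType) (F : R -> CC R) (B : CC R -> CC R).
Hypothesis F_flow : forall t, 0 <= t -> has_tderiv F t (F t * B (F t)).
Hypothesis ReB_le0 : forall z, @disc R z -> complex.Re (B z) <= 0.

Let r s := sqnorm (F s).

Let r_deriv t : 0 <= t ->
  has_deriv_within [set s | 0 <= s] r t (2 * (r t * complex.Re (B (F t)))).
Proof. by move=> t0; rewrite /r -Re_conj_mul; exact: has_tderiv_sqnorm (F_flow t0). Qed.

(* [Re B <= 0] is only known on the disc, whence the threshold [1]. *)
Lemma sqnorm_flow_nonincreasing a b : 0 <= a <= b -> r a < 1 -> r b <= r a.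
Proof.
move=> /andP[a0 ab] ra1.
apply: (nonincreasing_of_deriv (A := [set s | 0 <= s])) ab ra1.
- by move=> s /andP[ha _]; exact: le_trans ha.
- by move=> t /andP[ha _]; exact/r_deriv/(le_trans a0).
move=> t _ rt1; rewrite pmulr_rle0 // mulr_ge0_le0 ?sqnorm_ge0 //.
exact/ReB_le0/disc_sqnorm.
Qed.

Lemma ReB_eq0_of_flow (w : CC R) : @disc R w -> w != 0 ->
  F 0 = w -> sqnorm (F 1) = sqnorm w -> complex.Re (B w) = 0.
Proof.
move=> /disc_sqnorm w1 w0 F0 F1; apply/eqP; rewrite eq_le ReB_le0 ?disc_sqnorm //=.
rewrite leNgt; apply/negP => Bw.
have d0 : 2 * (r 0 * complex.Re (B (F 0))) < 0.
  by rewrite /r F0 pmulr_rlt0 // pmulr_rlt0 ?sqnorm_gt0.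
have [del del0 Hdel] := deriv_right_lt (r_deriv (lexx 0)) d0.
pose h := Num.min (del / 2) 1.
have h0 : 0 < h by rewrite lt_min ltr01 divr_gt0.
have h1 : h <= 1 by rewrite ge_min lexx orbT.
have hdel : h < del.
  have : h <= del / 2 by rewrite ge_min lexx.
  have : del / 2 < del by rewrite ltr_pdivrMr // ltr_pMr // ltr1n.
  lra.
have := Hdel h; rewrite h0 hdel add0r mul0r addr0 /r F0 => /(_ isT (ltW h0)) rh.
have hI : 0 <= h <= 1 by rewrite ltW.
have := sqnorm_flow_nonincreasing hI (lt_trans rh w1).
by rewrite /r F1; lra.
Qed.

End FlowModulus.

Section Holomorphic.
Variable R : realType.
Implicit Types (f : CC R -> CC R) (a z w : CC R).

Lemma near_real_ball a (P : CC R -> Prop) : (\forall x \near a, P x) ->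
  exists2 d : R, 0 < d & forall h, `|h| < (d%:C)%C -> P (a + h).
Proof.
move=> /nbhs_normP [d /= + Hd]; case: d Hd => d d' Hd.
rewrite ltcE /= => /andP[/eqP d'0 d0]; exists d => // h hd; apply: Hd.
by rewrite /ball_ /= opprD addrA subrr add0r normrN d'0.
Qed.

Lemma derivable_eps f a : derivable f a 1 -> forall e : R, 0 < e ->
  exists2 d : R, 0 < d & forall h, h != 0 -> `|h| < (d%:C)%C ->
    `|(f (a + h) - f a) / h - 'D_1 f a| < (e%:C)%C.
Proof.
move=> /cvgrPdist_lt fa e e0; have /fa : (0 : CC R) < (e%:C)%C by rewrite ltcR.
rewrite near_withinE => /near_real_ball [d d0 Hd]; exists d => // h h0 hd.
have := Hd h hd; rewrite add0r => /(_ h0); rewrite distrC.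
by rewrite /= [h *: 1]mulr1 [h^-1 *: _]mulrC (addrC h).
Qed.

Lemma derive_eq0_of_Re_eq0 f a : derivable f a 1 ->
  (\forall x \near a, complex.Re (f x) = 0) -> 'D_1 f a = 0.
Proof.
move=> fa /near_real_ball [rho rho0 Hrho]; set D := 'D_1 f a.
have Refa : complex.Re (f a) = 0 by rewrite -[a]addr0 Hrho // normr0 ltcR.
have Ref h : `|h| < (rho%:C)%C -> complex.Re (f (a + h) - f a) = 0.
  by move=> hr; rewrite ReB Refa Hrho // subrr.
have bound e : 0 < e -> `|complex.Re D| < e /\ `|complex.Im D| < e.
  move=> e0; have [d d0 Hd] := derivable_eps fa e0.
  pose s := Num.min d rho / 2.
  have s0 : 0 < s by rewrite divr_gt0 // lt_min d0.
  have sm : s < Num.min d rho by rewrite /s ltr_pdivrMr ?ltr_pMr ?ltr1n // lt_min d0.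
  have sd : s < d by rewrite (lt_le_trans sm) // ge_min lexx.
  have srho : s < rho by rewrite (lt_le_trans sm) // ge_min lexx orbT.
  pose q u := (f (a + (s%:C)%C * u) - f a) / ((s%:C)%C * u).
  have quot u : `|u| = 1 ->
      `|q u - D| < (e%:C)%C /\ complex.Re (f (a + (s%:C)%C * u) - f a) = 0.
    move=> u1; have hs : `|(s%:C)%C * u| = (s%:C)%C.
      by rewrite normrM u1 mulr1 normc_real gtr0_norm.
    split; last by apply: Ref; rewrite hs ltcR.
    apply: Hd; last by rewrite hs ltcR.
    by rewrite -normr_gt0 hs ltcR.
  have [q1 Re1] := quot 1 (normr1 _).
  have [qi Rei] := quot 'i%C (normc_i R).
  have Req1 : complex.Re (q 1) = 0.
    by move: Re1; rewrite /q !mulr1; exact: Re_div_real.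
  have Imqi : complex.Im (q 'i%C) = 0 by rewrite /q; exact: Im_div_imag.
  split; [exact: Re_lt_norm Req1 q1 | exact: Im_lt_norm Imqi qi].
have ReD : complex.Re D = 0 by apply: normr_lt_all_eq0 => e /bound [].
have ImD : complex.Im D = 0 by apply: normr_lt_all_eq0 => e /bound [].
by apply/eqP; rewrite eq_complex ReD ImD !eqxx.
Qed.

Lemma Re_eq0_of_punctured f a : derivable f a 1 ->
  (\forall x \near a, x != a -> complex.Re (f x) = 0) -> complex.Re (f a) = 0.
Proof.
move=> /derivable1_diffP/differentiable_continuous/cvgrPdist_lt fa Ref.
apply: normr_lt_all_eq0 => e e0.
have /fa : (0 : CC R) < (e%:C)%C by rewrite ltcR.
move=> /(filterI Ref) /near_real_ball [d d0 Hd].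
pose h := ((d / 2)%:C)%C : CC R.
have d20 : 0 < d / 2 by rewrite divr_gt0.
have hd : `|h| < (d%:C)%C.
  by rewrite normc_real ltcR gtr0_norm // ltr_pdivrMr // ltr_pMr // ltr1n.
have h0 : a + h != a by rewrite -subr_eq0 addrAC subrr add0r fmorph_eq0 gt_eqF.
have [/(_ h0) Re0 fe] := Hd h hd.
by apply: Re_lt_norm Re0 _; rewrite distrC.
Qed.

Lemma disc_nbhs z : @disc R z -> \forall x \near z, @disc R x.
Proof.
move=> z1; apply/nbhs_normP; exists (1 - `|z|); first by rewrite /= subr_gt0.
move=> x /=; rewrite /ball_ /= => zx; rewrite /disc /=.
by rewrite -(subrK z x) (le_lt_trans (ler_normD _ _)) // -ltrBrDr distrC.
Qed.

Lemma Im_ray_deriv0 f w t : (forall z, @disc R z -> derivable f z 1) ->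
  (forall z, @disc R z -> 'D_1 f z = 0) -> @disc R w -> 0 <= t <= 1 ->
  has_deriv_within [set s | 0 <= s <= 1]
    (fun s => complex.Im (f ((s%:C)%C * w))) t 0.
Proof.
move=> df Df0 w1 /andP[t0 t1]; apply/has_deriv_withinP => e e0.
set z := (t%:C)%C * w.
have z1 : @disc R z.
  apply/disc_sqnorm; rewrite sqnormM; have /disc_sqnorm := w1.
  have : sqnorm (t%:C)%C <= 1 by rewrite /sqnorm /= expr0n addr0 expr_le1.
  by have := sqnorm_ge0 w; nra.
have [d d0 Hd] := derivable_eps (df z z1) e0.
exists d => // s _ sd; rewrite mul0r subr0 rmorphD mulrDl -/z.
set h := (s%:C)%C * w.
have [->|h0] := eqVneq h 0.
  by rewrite addr0 subrr normr0 mulr_ge0 // ltW.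
have hs : `|h| <= (`|s|%:C)%C.
  by rewrite normrM normc_real ler_piMr ?ler0c // ltW.
have hpos : 0 < `|h| by rewrite normr_gt0.
have fh : `|f (z + h) - f z| <= (e%:C)%C * `|h|.
  have := Hd h h0 (le_lt_trans hs _); rewrite ltcR => /(_ sd).
  by rewrite Df0 // subr0 normrM normfV ltr_pdivrMr // => /ltW.
rewrite -ImB -lecR rmorphM /=.
apply: le_trans (normc_ge_Im _) (le_trans fh _).
by rewrite ler_wpM2l // lecR ltW.
Qed.

Lemma Im_const_of_derive_eq0 f : (forall z, @disc R z -> derivable f z 1) ->
  (forall z, @disc R z -> 'D_1 f z = 0) ->
  forall w, @disc R w -> complex.Im (f w) = complex.Im (f 0).
Proof.
move=> df Df0 w w1; pose phi s := complex.Im (f ((s%:C)%C * w)).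
have nonincr (g : R -> R) :
    (forall t, 0 <= t <= 1 -> has_deriv_within [set s | 0 <= s <= 1] g t 0) ->
    g 1 <= g 0.
  move=> dg; apply: (@nonincreasing_of_deriv _ g (fun=> 0) [set s | 0 <= s <= 1] 0 1
    (g 0 + 1)) => //.
  by rewrite ltrDl.
have dphi t : 0 <= t <= 1 -> has_deriv_within [set s | 0 <= s <= 1] phi t 0.
  exact: Im_ray_deriv0.
have dphiN t : 0 <= t <= 1 ->
    has_deriv_within [set s | 0 <= s <= 1] (fun s => - phi s) t 0.
  by move=> ht; have := has_deriv_withinN (dphi t ht); rewrite oppr0.
have := nonincr _ dphi; have := nonincr _ dphiN.
rewrite /phi rmorph1 rmorph0 mul1r mul0r; lra.
Qed.

End Holomorphic.

Theorem proposition5p5 (R : realType) (nu : R -> probability (R * R)%type R)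
    (alpha : R) (B2 : CC R -> CC R) :
  mm_semigroup nu ->
  (forall A : set (R * R), measurable A -> nu 0 A = \d_((1, 0) : R * R) A) ->
  (forall A : set (R * R), measurable A ->
     nu 1 A = \d_((cos alpha, sin alpha) : R * R) A) ->
  analytic_on_disc B2 ->
  (forall z, @disc R z -> complex.Re (B2 z) <= 0) ->
  (forall (t : R) (z : CC R), 0 <= t -> @disc R z ->
     has_tderiv (fun s => etaT (nu s) z) t (etaT (nu t) z * B2 (etaT (nu t) z))) ->
  exists c : R, forall z, @disc R z -> B2 z = Complex 0 c.
Proof.
move=> _ nu0 nu1 dB ReB_le0 flow.
have eta0 z : @disc R z -> etaT (nu 0) z = z.
  have circ : sqnorm (toC ((1, 0) : R * R)) = 1 by exact: sqnorm1.
  by move=> z1; rewrite (etaT_dirac nu0) // mulr1.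
have eta1 z : @disc R z -> sqnorm (etaT (nu 1) z) = sqnorm z.
  have circ : sqnorm (toC (cos alpha, sin alpha)) = 1 by exact: cos2Dsin2.
  by move=> z1; rewrite (etaT_dirac nu1) // sqnormM circ mulr1.
have ReB2_punct w : @disc R w -> w != 0 -> complex.Re (B2 w) = 0.
  move=> w1 w0; apply: (ReB_eq0_of_flow (fun t t0 => flow t w t0 w1)) => //.
  - exact: eta0.
  - exact: eta1.
have ReB2 w : @disc R w -> complex.Re (B2 w) = 0.
  move=> w1; have [w_eq0|] := eqVneq w 0; last exact: ReB2_punct.
  rewrite w_eq0 in w1 *; apply: Re_eq0_of_punctured (dB 0 w1) _.
  by apply: filterS (disc_nbhs w1) => x x1 x0; exact: ReB2_punct.
have DB2 z : @disc R z -> 'D_1 B2 z = 0.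
  by move=> z1; apply: derive_eq0_of_Re_eq0 (dB z z1) (filterS ReB2 (disc_nbhs z1)).
exists (complex.Im (B2 0)) => z z1.
rewrite -(Im_const_of_derive_eq0 dB DB2 z1) -(ReB2 z z1).
by case: (B2 z).
Qed.
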